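(* Let $d\ge2$, $n\ge1$, $d\le t\le dn$, and let $\gamma$ be a positive conductivity on the lattice graph below. Suppose $\mathbf u\in\mathbb R^{L_t^{\mathcal S}\cup J_{t-1}^{\mathcal S}}$ satisfies $\sum_{q\in\mathcal N(p)}\gamma_{pq}(\mathbf u_q-\mathbf u_p)=0$ for all $p\in L_{t-1}^{\mathcal S}$, $\mathbf u=0$ on $J_{t-1}^{\mathcal S}$, and $\gamma_{bq_b}(\mathbf u_{q_b}-\mathbf u_b)=0$ for all $b\in J_{t-1}^{\mathcal S}$. Then $\mathbf u=0$.
   Context: Lattice: $D=\{x\in\mathbb Z^d:1\le x_i\le n\ \forall i\}$, $\partial D=\{p\in\mathbb Z^d:\min_{q\in D}\|q-p\|_{\ell^1}=1\}$; $E$ = unordered pairs $pq\subseteq D\cup\partial D$ with $\|p-q\|_{\ell^1}=1$, not both in $\partial D$; $\mathcal N(p)=\{q:pq\in E\}$; each $b\in\partial D$ has exactly one neighbour $q_b$, which lies in $D$. Conductivity $\gamma:E\to(0,\infty)$, symmetric. With $s(x)=\sum_ix_i$: $L_t^{\mathcal S}=\{x\in D:s(x)\le t\}$, $K_t^+=\{x\in\partial D:s(x)=t,\max_ix_i=n+1\}$, $K_t^-=\{x\in\partial D:s(x)=t,\min_ix_i=0\}$, $K_t^{\mathcal S\pm}=\bigcup_{\ell\le t}K_\ell^\pm$, $J_t^{\mathcal S}=K_t^{\mathcal S-}\cup K_{t+1}^{\mathcal S+}$. (All neighbours of nodes of $L_{t-1}^{\mathcal S}$, and all $q_b$ with $b\in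 J_{t-1}^{\mathcal S}$, lie in $L_t^{\mathcal S}\cup J_{t-1}^{\mathcal S}$.) *)

From mathcomp Require Import all_boot all_order all_algebra.
Unset Implicit Arguments.
Import Order.TTheory GRing.Theory Num.Theory.

(* Points of Z^d with all coordinates in {0,...,n+1}; this box contains
   D and its l1-boundary dD. Coordinates are read as nats. *)
Definition pt (d n : nat) := {ffun 'I_d -> 'I_n.+2}.

Section Lattice.
Variables d n : nat.
Implicit Types x y p q b : pt d n.

Definition l1dist x y : nat :=
  \sum_(i < d) ((x i - y i) + (y i - x i))%N.

Definition inD x : bool := [forall i, (1 <= x i <= n)%N].

(* dD = {p : min_{q in D} ||q - p||_1 = 1} *)
Definition inBd p : bool :=
  [exists q, inD q && (l1dist q p == 1%N)] &&
  [forall q, inD q ==> (1 <= l1dist q p)%N].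

Definition inV x : bool := inD x || inBd x.

Definition edge p q : bool :=
  [&& inV p, inV q, l1dist p q == 1%N & ~~ (inBd p && inBd q)].

Definition ssum x : nat := \sum_(i < d) (x i : nat).

Definition inL (t : nat) x : bool := inD x && (ssum x <= t)%N.

Definition inKp (t : nat) x : bool :=
  [&& inBd x, ssum x == t & \max_(i < d) (x i : nat) == n.+1].
Definition inKm (t : nat) x : bool :=
  [&& inBd x, ssum x == t & [exists i, (x i : nat) == 0%N]].

Definition inKSp (t : nat) x : bool := [exists l : 'I_t.+1, inKp l x].
Definition inKSm (t : nat) x : bool := [exists l : 'I_t.+1, inKm l x].

Definition inJ (t : nat) x : bool := inKSm t x || inKSp t.+1 x.

End Lattice.

From mathcomp Require Import all_boot all_order all_algebra zify.
Import Order.TTheory GRing.Theory Num.Theory.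
Local Open Scope ring_scope.

(* Fix a direction i and induct on the points x of L_t in the lexicographic
   order of (s(x), x_i).  If x_i = 1, then b = x - e_i is a point of
   K^-_{s(x)-1}, contained in J_{t-1}, and the flux condition on the edge bx
   forces u_x = u_b = 0.  If x_i > 1, then p = x - e_i lies in L_{t-1} and
   u_p = 0 by induction; every neighbour of p other than x lies either in
   J_{t-1} or in D and before x, so the balance equation at p reduces to
   gamma_px u_x = 0. *)

Section Lattice.
Context {d n : nat}.
Local Notation pt := (pt d n).
Local Notation inD := (inD d n).
Local Notation inBd := (inBd d n).
Local Notation l1dist := (l1dist d n).
Local Notation ssum := (ssum d n).
Local Notation edge := (edge d n).
Local Notation inL := (inL d n).
Local Notation inJ := (inJ d n).
Implicit Types (x y p q b : pt) (i j : 'I_d).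

Definition setc x i (v : nat) : pt :=
  [ffun j => if j == i then inord v else x j].

Definition agree_off i x y := forall j, j != i -> x j = y j.

Definition rank i x := (ssum x * n.+2 + x i)%N.

Lemma agree_offC {i x y} : agree_off i x y -> agree_off i y x.
Proof. by move=> xy j /xy ->. Qed.

Lemma setc_same x i v : (v <= n.+1)%N -> setc x i v i = v :> nat.
Proof. by move=> v_le; rewrite ffunE eqxx inordK. Qed.

Lemma agree_off_setc x i v : agree_off i (setc x i v) x.
Proof. by move=> j /negbTE ji; rewrite ffunE ji. Qed.

Lemma l1distC x y : l1dist x y = l1dist y x.
Proof. by apply: eq_bigr => j _; rewrite addnC. Qed.

Lemma leq_coord_l1dist x y i : (x i - y i + (y i - x i) <= l1dist x y)%N.
Proof. by rewrite /l1dist (bigD1 i) //= leq_addr. Qed.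

Lemma l1dist_agree_off {x y i} :
  agree_off i x y -> l1dist x y = (x i - y i + (y i - x i))%N.
Proof. by move=> xy; rewrite /l1dist (bigD1 i) //= big1 ?addn0 // => j /xy ->; lia. Qed.

Lemma ssum_agree_off {x y i} : agree_off i x y -> (ssum x + y i = ssum y + x i)%N.
Proof.
move=> xy; rewrite /ssum (bigD1 i) //= [in RHS](bigD1 i) //=.
by rewrite (eq_bigr (fun j => y j : nat)) => [|j /xy ->]; first lia.
Qed.

Lemma l1dist_eq1 {x y} : l1dist x y = 1%N ->
  exists i, agree_off i x y /\ (y i = x i + 1 :> nat \/ x i = y i + 1 :> nat)%N.
Proof.
have [i /negbTE xy_i|xy0] := pickP (fun i => x i - y i + (y i - x i) != 0)%N; last first.
  by rewrite /l1dist big1 // => j _; apply/eqP/negbFE/xy0.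
rewrite /l1dist (bigD1 i) //=; set r := (X in (_ + X)%N) => xy1.
have /eqP : r = 0%N by move: xy_i xy1; clearbody r; lia.
rewrite sum_nat_eq0 => /forallP r0; exists i; split; last by lia.
by move=> j ji; have := r0 j; rewrite ji /= => /eqP rj; apply/val_inj => /=; lia.
Qed.

Lemma inD_coord {x} i : inD x -> (1 <= x i <= n)%N.
Proof. by move/forallP. Qed.

Lemma inD_agree_off {x y i} :
  inD x -> agree_off i x y -> (1 <= y i <= n)%N -> inD y.
Proof.
move=> xD xy yi; apply/forallP => j.
by have [-> //|/xy <-] := eqVneq j i; apply: inD_coord.
Qed.

Lemma inD_notBd {x} : inD x -> ~~ inBd x.
Proof.
move=> xD; apply/negP => /andP[_ /forallP /(_ x)].
by rewrite xD /l1dist big1 // => j _; lia.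
Qed.

Lemma edge_inD {p q} : inD p -> inD q -> l1dist p q = 1%N -> edge p q.
Proof.
by move=> pD qD pq1; rewrite /edge /inV pD qD pq1 eqxx (negbTE (inD_notBd pD)).
Qed.

Lemma inBd_zero_coord {x q i} :
  x i = 0%N :> nat -> inD q -> l1dist q x = 1%N -> inBd x.
Proof.
move=> xi0 qD qx1; apply/andP; split; first by apply/existsP; exists q; rewrite qD qx1.
apply/forallP => r; apply/implyP => rD.
by have := leq_coord_l1dist r x i; have := inD_coord i rD; lia.
Qed.

Lemma inJ_zero_coord {t x i} :
  inBd x -> x i = 0%N :> nat -> (ssum x <= t)%N -> inJ t x.
Proof.
move=> xB xi0 xt; apply/orP; left; apply/existsP.
exists (Ordinal (xt : ssum x < t.+1)%N); rewrite /inKm xB /= eqxx /=.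
by apply/existsP; exists i; rewrite xi0.
Qed.

Lemma inJ_top_coord {t x i} :
  inBd x -> x i = n.+1 :> nat -> (ssum x <= t.+1)%N -> inJ t x.
Proof.
move=> xB xin xt; apply/orP; right; apply/existsP.
exists (Ordinal (xt : ssum x < t.+2)%N); rewrite /inKp xB /= eqxx /= eqn_leq.
apply/andP; split; first by apply/bigmax_leqP => j _; rewrite -ltnS.
by have := leq_bigmax_cond (F := fun j => x j : nat) i isT; rewrite xin.
Qed.

Lemma edge_inL_J {t p q} : inL t p -> edge p q -> ~~ inD q -> inJ t q.
Proof.
move=> /andP[pD ps] /and4P[_ /orP[-> //|qB] /eqP/l1dist_eq1[i [pq qi]] _] qnD.
have := inD_coord i pD; have := ssum_agree_off pq; have := ltn_ord (q i).
have : ~~ (1 <= q i <= n)%N by apply: contra qnD; exact: inD_agree_off pD pq.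
by case: qi => qi *; [apply: (inJ_top_coord (i := i) qB) | apply: (inJ_zero_coord (i := i) qB)]; lia.
Qed.

Lemma rank_lt_ssum i {x y} : (ssum y < ssum x)%N -> (rank i y < rank i x)%N.
Proof.
rewrite /rank => lt_yx; have := ltn_ord (y i).
have : ((ssum y).+1 * n.+2 <= ssum x * n.+2)%N by rewrite leq_pmul2r.
by rewrite mulSn; lia.
Qed.

Lemma rank_lt_coord {i x y} :
  (ssum y <= ssum x)%N -> (y i < x i)%N -> (rank i y < rank i x)%N.
Proof. by rewrite /rank -(leq_pmul2r (ltn0Sn n.+1)); lia. Qed.

Lemma ssum_le_rank {i x y} : (rank i y < rank i x)%N -> (ssum y <= ssum x)%N.
Proof.
by apply: contraTT; rewrite -!ltnNge => /(rank_lt_ssum i)/ltnW.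
Qed.

Lemma rank_pred_neighbour {i x q} : (1 < x i)%N ->
  l1dist (setc x i (x i).-1) q = 1%N -> q != x -> (rank i q < rank i x)%N.
Proof.
set p := setc x i _ => xi /l1dist_eq1[j [pq qj]] qx.
have px : agree_off i p x := agree_off_setc x i (x i).-1.
have pi : p i = (x i).-1 :> nat by apply: setc_same; have := ltn_ord (x i); lia.
have := ssum_agree_off px; have := ssum_agree_off pq; have := ltn_ord (q i).
have [ji|ji] := eqVneq j i; last first.
  have qi : p i = q i :> nat by rewrite pq // eq_sym.
  by move=> *; apply: rank_lt_coord; lia.
rewrite ji in pq qj *; case: qj => qi; last by move=> *; apply: rank_lt_ssum; lia.
case/eqP: qx; apply/ffunP => k; have [->|ki] := eqVneq k i.
  by apply/val_inj => /=; lia.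
by rewrite -pq // px.
Qed.

Section Vanishing.
Context {R : realFieldType} {t : nat} {gamma : pt -> pt -> R} {u : pt -> R}.
Hypothesis gamma_gt0 : forall p q, edge p q -> 0 < gamma p q.
Hypothesis u_harmonic : forall p, inL t.-1 p ->
  \sum_(q | edge p q) gamma p q * (u q - u p) = 0.
Hypothesis u_J : forall b, inJ t.-1 b -> u b = 0.
Hypothesis flux_J : forall b, inJ t.-1 b -> forall q, edge b q ->
  gamma b q * (u q - u b) = 0.

Lemma u_edge_eq0 {p q} :
  edge p q -> u p = 0 -> gamma p q * (u q - u p) = 0 -> u q = 0.
Proof.
by move=> pq -> /eqP; rewrite subr0 mulf_eq0 (gt_eqF (gamma_gt0 _ _ pq)) => /eqP.
Qed.

Lemma u_eq0_edge_J {b q} : inJ t.-1 b -> edge b q -> u q = 0.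
Proof. by move=> bJ bq; apply: u_edge_eq0 bq (u_J _ bJ) (flux_J _ bJ _ bq). Qed.

Lemma u_eq0_last_neighbour {p x} : inL t.-1 p -> edge p x -> u p = 0 ->
  (forall q, edge p q -> q != x -> u q = 0) -> u x = 0.
Proof.
move=> pL px up uq; apply: (u_edge_eq0 px up).
have := u_harmonic _ pL; rewrite (bigD1 x) //= big1 ?addr0 // => q /andP[pq qx].
by rewrite uq // up subrr mulr0.
Qed.

Lemma u_eq0_lower_face {i x} :
  inD x -> x i = 1%N :> nat -> (ssum x <= t)%N -> u x = 0.
Proof.
move=> xD xi1 xt; set b := setc x i 0.
have bx : agree_off i b x := agree_off_setc x i 0.
have bi0 : b i = 0%N :> nat by apply: setc_same.
have bx1 : l1dist b x = 1%N by rewrite (l1dist_agree_off bx) bi0 xi1.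
have bB : inBd b by apply: (inBd_zero_coord bi0 xD); rewrite l1distC.
apply: (u_eq0_edge_J (b := b)).
  by apply: (inJ_zero_coord bB bi0); have := ssum_agree_off bx; lia.
by rewrite /edge /inV bB xD orbT bx1 eqxx (negbTE (inD_notBd xD)).
Qed.

Lemma u_eq0_inL i x : inL t x -> u x = 0.
Proof.
move: (ltnSn (rank i x)); move: {2}(rank i x).+1 => k.
elim: k x => // k IH x /[!ltnS] rk /andP[xD xt].
have := inD_coord i xD; case: (ltngtP (x i) 1%N) => [|xi xin|xi1 _]; first by lia.
  set p := setc x i (x i).-1.
  have px : agree_off i p x := agree_off_setc x i (x i).-1.
  have pi : p i = (x i).-1 :> nat by apply: setc_same; have := ltn_ord (x i); lia.
  have pD : inD p by apply: (inD_agree_off xD (agree_offC px)); rewrite pi; lia.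
  have ps : (ssum p < ssum x)%N by have := ssum_agree_off px; lia.
  have pL : inL t.-1 p by rewrite /inL pD; lia.
  have up : u p = 0.
    by apply: IH; [apply: leq_trans (rank_lt_ssum i ps) rk | rewrite /inL pD; lia].
  apply: (u_eq0_last_neighbour pL _ up).
    by apply: (edge_inD pD xD); rewrite (l1dist_agree_off px) pi; lia.
  move=> q pq qx; have [qD|qnD] := boolP (inD q); last exact: u_J _ (edge_inL_J pL pq qnD).
  have qx_rank : (rank i q < rank i x)%N.
    by apply: (rank_pred_neighbour xi _ qx); case/and4P: pq => _ _ /eqP.
  apply: IH; first exact: leq_trans qx_rank rk.
  by rewrite /inL qD (leq_trans (ssum_le_rank qx_rank)).
exact: u_eq0_lower_face xD xi1 xt.
Qed.

End Vanishing.

End Lattice.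

Theorem lemma3p1 (R : realFieldType) (d n t : nat)
  (gamma : pt d n -> pt d n -> R) (u : pt d n -> R) :
  (2 <= d)%N -> (1 <= n)%N -> (d <= t <= d * n)%N ->
  (forall p q, edge d n p q -> gamma p q = gamma q p) ->
  (forall p q, edge d n p q -> 0 < gamma p q) ->
  (forall p, inL d n t.-1 p ->
     \sum_(q | edge d n p q) gamma p q * (u q - u p) = 0) ->
  (forall b, inJ d n t.-1 b -> u b = 0) ->
  (forall b, inJ d n t.-1 b -> forall q, edge d n b q ->
     gamma b q * (u q - u b) = 0) ->
  forall p, inL d n t p || inJ d n t.-1 p -> u p = 0.
Proof.
move=> d_ge2 _ _ _ gamma_gt0 u_harmonic u_J flux_J p /orP[pL|]; last exact: u_J.
have d_gt0 : (0 < d)%N by apply: leq_trans d_ge2.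
exact: u_eq0_inL gamma_gt0 u_harmonic u_J flux_J (Ordinal d_gt0) p pL.
Qed.
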